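(* Let $k\ge2$ and $n\in\mathbb{Z}$ with $\mathcal{F}_{n,k}(x)$ not identically zero. Then there is a polynomial $P_{n,k}(y)\in\mathbb{Z}[y]$ with $P_{n,k}(0)\neq0$ such that $$\mathcal{F}_{n,k}(x)=x^{r_{n,k}}\,P_{n,k}(x^k).$$ In particular, if $r_{n,k}>0$ then $x=0$ is a root of $\mathcal{F}_{n,k}$ of multiplicity exactly $r_{n,k}$, and if $r_{n,k}=0$ then $x=0$ is not a root.
   Context: For $k\ge2$, the polynomials $\mathcal{F}_{n,k}(x)\in\mathbb{Z}[x]$ ($n\in\mathbb{Z}$) are defined by $\mathcal{F}_{1,k}=1$, $\mathcal{F}_{n,k}=0$ for $n=0,-1,\dots,-(k-2)$, and $\mathcal{F}_{n,k}(x)=\sum_{j=1}^{k}x^{k-j}\mathcal{F}_{n-j,k}(x)$ for all $n\in\mathbb{Z}$. This recurrence is used upwards for $n\ge2$, and downwards for $n\le-(k-1)$ as $\mathcal{F}_{n,k}=\mathcal{F}_{n+k,k}-\sum_{j=1}^{k-1}x^j\mathcal{F}_{n+j,k}$. The quantity $r_{n,k}\in\{0,\dots,k-1\}$ is defined as the residue of $(k-1)(n-1)$ modulo $k$ if $n>0$, and as the residue of $|n|+1$ modulo $k$ if $n\le0$. *)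

From mathcomp Require Import all_boot all_order all_algebra.
Set Implicit Arguments. Unset Strict Implicit. Unset Printing Implicit Defensive.
Import Order.TTheory GRing.Theory Num.Theory.
Local Open Scope ring_scope.

(* Upward windows: Fup_win k m = [:: F_{m+1}; F_m; ...; F_{m+2-k}] (k entries). *)
Fixpoint Fup_win (k : nat) (m : nat) : seq {poly int} :=
  match m with
  | 0%N => 1 :: nseq k.-1 0
  | m'.+1 =>
      let w := Fup_win k m' in
      (\sum_(1 <= j < k.+1) 'X^(k - j) * nth 0 w j.-1) :: take k.-1 w
  end.

(* Downward windows: Fdown_win k m = [:: F_a; F_{a+1}; ...; F_{a+k-1}]
   with a = -(k-2) - m  (k entries). Uses F_n = F_{n+k} - sum_{i=1}^{k-1} x^i F_{n+i}. *)
Fixpoint Fdown_win (k : nat) (m : nat) : seq {poly int} :=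
  match m with
  | 0%N => rcons (nseq k.-1 0) 1
  | m'.+1 =>
      let w := Fdown_win k m' in
      (nth 0 w k.-1 - \sum_(1 <= i < k) 'X^i * nth 0 w i.-1) :: take k.-1 w
  end.

Definition Fpoly (k : nat) (n : int) : {poly int} :=
  match n with
  | Posz m.+1 => head 0 (Fup_win k m)
  | Posz 0 => head 0 (Fdown_win k (2 - k)%N)          (* n = 0 = -(k-2) - (2-k) when k = 2; else 0 *)
  | Negz m => head 0 (Fdown_win k (m.+1 + 2 - k)%N)
  end.

Definition rnk (k : nat) (n : int) : nat :=
  match n with
  | Posz m.+1 => ((k.-1 * m) %% k)%N
  | Posz 0 => (1 %% k)%N
  | Negz m => (m.+2 %% k)%N
  end.

From mathcomp Require Import all_boot all_order all_algebra.
From mathcomp Require Import zify ring.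
Set Implicit Arguments. Unset Strict Implicit. Unset Printing Implicit Defensive.
Import Order.TTheory GRing.Theory Num.Theory.
Local Open Scope ring_scope.

(** Shift indices so that both directions of the recurrence become sequences
  over [nat]: [u_i = F_{i+2-k}] upwards and [h_i = F_{1-i}] downwards. The
  recurrence preserves the residue modulo [k] of the exponents, so every
  exponent of [u_i] is [-(i+1)] and every exponent of [h_i] is [i] modulo [k];
  this is exactly the shape [x^r P(x^k)]. It remains to see [P(0) <> 0], i.e.
  that the coefficient of [x^r] does not vanish. Upwards all coefficients are
  nonnegative and the summand [j = k - r] of the recurrence reduces the claim to
  the constant term of an earlier [u]. Downwards the recurrence collapses to
  [h_{i+k+1} = (1 + x^k) h_{i+1} - x h_i], from which the coefficient of [x^b] in
  [h_{ka+b}] is [(-1)^b C(a, b)] and [h_{ka+b} = 0] for [a < b]. *)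

Section SupportModulo.
Variables (R : nzRingType) (k : nat).

Definition supp_mod (r : nat) (p : {poly R}) :=
  forall d, p`_d != 0 -> d = r %[mod k].

Lemma supp_mod0 r : supp_mod r 0.
Proof. by move=> d; rewrite coef0 eqxx. Qed.

Lemma supp_mod1 r : r = 0 %[mod k] -> supp_mod r 1.
Proof. by move=> r0 [|d]; rewrite coef1 ?eqxx. Qed.

Lemma supp_mod_congr r s p : r = s %[mod k] -> supp_mod r p -> supp_mod s p.
Proof. by move=> rs hp d /hp ->. Qed.

Lemma supp_modD r p q : supp_mod r p -> supp_mod r q -> supp_mod r (p + q).
Proof.
move=> hp hq d; rewrite coefD; have [->|/hp //] := eqVneq p`_d 0.
by rewrite add0r => /hq.
Qed.

Lemma supp_modB r p q : supp_mod r p -> supp_mod r q -> supp_mod r (p - q).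
Proof. by move=> hp hq; apply: supp_modD => // d; rewrite coefN oppr_eq0 => /hq. Qed.

Lemma supp_mod_sum r (I : Type) (s : seq I) (P : pred I) (F : I -> {poly R}) :
  (forall i, P i -> supp_mod r (F i)) -> supp_mod r (\sum_(i <- s | P i) F i).
Proof. by apply: big_ind => //; [exact: supp_mod0 | exact: supp_modD]. Qed.

Lemma supp_modXnM r j p : supp_mod r p -> supp_mod (j + r) ('X^j * p).
Proof.
move=> hp d; rewrite coefXnM; case: ltnP => [_|jd /hp dr]; first by rewrite eqxx.
by rewrite -(subnKC jd) addnC [(j + r)%N]addnC -modnDml dr modnDml.
Qed.

Lemma supp_mod_comp_Xn r p : (0 < k)%N -> supp_mod r p ->
  exists P : {poly R}, p = 'X^(r %% k) * (P \Po 'X^k) /\ P`_0 = p`_(r %% k).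
Proof.
move=> k_gt0 hp; set s := (r %% k)%N.
exists (\poly_(i < size p) p`_(s + i * k)); split; last first.
  rewrite coef_poly mul0n addn0; case: ltnP => // p0.
  by rewrite nth_default // (leq_trans p0).
apply/polyP => d; rewrite coefXnM coef_comp_poly_Xn // coef_poly.
have [pd0|/hp dr] := eqVneq p`_d 0.
  rewrite pd0; case: ltnP => // sd; case: ifP => // kd; case: ltnP => // _.
  by rewrite divnK // subnKC.
have sd : (s <= d)%N by rewrite /s -dr leq_mod.
have kd : (k %| d - s)%N by rewrite -eqn_mod_dvd // dr modn_mod.
rewrite ltnNge sd /= kd divnK // subnKC //; case: ltnP => // pd.
rewrite nth_default // (leq_trans pd) // (leq_trans (leq_div _ _)) ?leq_subr //.
Qed.
End SupportModulo.

Section Upward.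
Variable k : nat.
Hypothesis k_gt1 : (1 < k)%N.

(* [Fup i] is F_{i+2-k}. *)
Definition Fup (i : nat) : {poly int} :=
  if (k.-1 <= i)%N then head 0 (Fup_win k (i - k.-1)) else 0.

Lemma Fup_win_nth m t : (t < k)%N -> nth 0 (Fup_win k m) t = Fup (m + k.-1 - t).
Proof.
elim: m t => [|m IH] [|t] t_lt /=.
- by rewrite /Fup add0n subn0 leqnn subnn.
- by rewrite nth_nseq if_same /Fup ifF //; apply/negbTE; lia.
- by rewrite /Fup subn0 leq_addl addnK.
- by rewrite nth_take ?IH; [congr Fup; lia | lia | lia].
Qed.

Lemma Fup_small i : (i < k.-1)%N -> Fup i = 0.
Proof. by move=> i_lt; rewrite /Fup leqNgt i_lt. Qed.

Lemma Fup_init : Fup k.-1 = 1.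
Proof. by rewrite /Fup leqnn subnn. Qed.

Lemma Fup_rec i : (k <= i)%N ->
  Fup i = \sum_(1 <= j < k.+1) 'X^(k - j) * Fup (i - j).
Proof.
move=> k_le_i; have -> : Fup i = head 0 (Fup_win k (i - k).+1).
  by rewrite /Fup ifT; [congr (head 0 (Fup_win k _)) | ]; lia.
apply: eq_big_nat => j /andP [j_gt0 j_le].
by rewrite Fup_win_nth; [congr (_ * Fup _) | ]; lia.
Qed.

Lemma Fup_coef_ge0 i d : 0 <= (Fup i)`_d.
Proof.
elim/ltn_ind: i d => i IH d.
case: (ltngtP i k.-1) => [i_lt | k_le_i | ->].
- by rewrite Fup_small // coef0.
- rewrite Fup_rec; last lia.
  rewrite coef_sum big_seq; apply: sumr_ge0 => j; rewrite mem_index_iota => j_lt.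
  by rewrite coefXnM; case: ltnP => // _; apply: IH; lia.
- by rewrite Fup_init coef1; case: (d == 0%N).
Qed.

(* [k.-1 * i.+1] is [-(i+1)] modulo [k]. *)
Lemma Fup_supp_mod i : supp_mod k (k.-1 * i.+1) (Fup i).
Proof.
elim/ltn_ind: i => i IH.
case: (ltngtP i k.-1) => [i_lt | k_le_i | ->].
- by rewrite Fup_small //; apply: supp_mod0.
- rewrite Fup_rec; last lia.
  rewrite big_seq; apply: supp_mod_sum => j.
  rewrite mem_index_iota => /andP [j_gt0 j_le].
  apply: (@supp_mod_congr _ _ (k - j + k.-1 * (i - j).+1)%N).
    2: by apply/supp_modXnM/IH; lia.
  have E : (j * k + (k - j + k.-1 * (i - j).+1) = 1 * k + k.-1 * i.+1)%N by nia.
  by rewrite -(modnMDl j) E modnMDl.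
- by rewrite Fup_init; apply: supp_mod1; rewrite prednK ?modnMl ?mod0n // ltnW.
Qed.

Lemma Fup_coef_pos i r : (k.-1 <= i)%N -> (r < k)%N -> (k %| r + i.+1)%N ->
  0 < (Fup i)`_r.
Proof.
elim/ltn_ind: i r => i IH r k_le_i r_lt k_dvd.
case: (ltngtP i k.-1) => [| k_lt_i | i_eq]; first lia.
- rewrite Fup_rec; last lia.
  (* The summand [j = k - r] is the constant term of [Fup (i - (k - r))]. *)
  rewrite coef_sum (bigD1_seq (k - r)%N) /=; last exact: iota_uniq.
    2: by rewrite mem_index_iota; lia.
  apply: ltr_wpDr.
    apply: sumr_ge0 => j _; rewrite coefXnM; case: ltnP => // _.
    exact: Fup_coef_ge0.
  have E : (r + i.+1 = (i - (k - r)).+1 + k)%N by lia.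
  rewrite E (dvdn_addl _ (dvdnn k)) in k_dvd.
  have k_le := dvdn_leq (ltn0Sn _) k_dvd.
  rewrite (subKn (ltnW r_lt)) coefXnM ltnn subnn.
  by apply: IH; rewrite ?add0n //; lia.
- have r0 : r = 0%N.
    move: k_dvd; rewrite i_eq (prednK (ltnW k_gt1)) (dvdn_addl _ (dvdnn k)).
    by rewrite /dvdn modn_small // => /eqP.
  by rewrite i_eq Fup_init r0 coef1.
Qed.

Lemma Fup_factor i : (k.-1 <= i)%N ->
  exists P : {poly int}, P`_0 != 0 /\ Fup i = 'X^(k.-1 * i.+1 %% k) * (P \Po 'X^k).
Proof.
move=> k_le_i; have k_gt0 : (0 < k)%N := ltnW k_gt1.
have [P [Fup_eq P0]] := supp_mod_comp_Xn k_gt0 (@Fup_supp_mod i).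
exists P; split=> //; rewrite P0; apply/lt0r_neq0/Fup_coef_pos => //.
  exact: ltn_pmod.
by rewrite /dvdn modnDml -mulSnr (prednK k_gt0) modnMr.
Qed.
End Upward.

Section Downward.
Variable k : nat.
Hypothesis k_gt1 : (1 < k)%N.

(* [Fdown i] is F_{1-i}. *)
Definition Fdown (i : nat) : {poly int} :=
  if (k <= i)%N then head 0 (Fdown_win k (i - k.-1)) else (i == 0%N)%:R.

Lemma Fdown_win_nth m t : (t < k)%N -> nth 0 (Fdown_win k m) t = Fdown (k.-1 + m - t).
Proof.
elim: m t => [|m IH] t t_lt /=.
  have /negbTE small : ~~ (k <= k.-1 - t)%N by lia.
  rewrite nth_rcons size_nseq addn0 /Fdown small.
  case: ltnP => [t_lt' | t_ge].
    by rewrite nth_nseq t_lt'; have /negbTE -> : (k.-1 - t != 0)%N by lia.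
  have -> : t = k.-1 by lia.
  by rewrite eqxx subnn.
case: t t_lt => [|t] t_lt /=.
  by rewrite /Fdown subn0 ifT ?addKn //; lia.
by rewrite nth_take ?IH; [congr Fdown; lia | lia | lia].
Qed.

Lemma Fdown0 : Fdown 0 = 1.
Proof. by rewrite /Fdown leqNgt (ltnW k_gt1). Qed.

Lemma Fdown_small i : (0 < i < k)%N -> Fdown i = 0.
Proof. by case/andP=> i_gt0 i_lt; rewrite /Fdown leqNgt i_lt eqn0Ngt i_gt0. Qed.

Lemma Fdown_rec i : (k <= i)%N ->
  Fdown i = Fdown (i - k) - \sum_(1 <= j < k) 'X^j * Fdown (i - j).
Proof.
move=> k_le_i; have -> : Fdown i = head 0 (Fdown_win k (i - k).+1).
  by rewrite /Fdown k_le_i; congr (head 0 (Fdown_win k _)); lia.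
rewrite /= Fdown_win_nth; last lia.
congr (Fdown _ - _); first lia.
apply: eq_big_nat => j /andP [j_gt0 j_lt].
by rewrite Fdown_win_nth; [congr (_ * Fdown _) | ]; lia.
Qed.

Lemma Fdown_k : Fdown k = 1.
Proof.
rewrite Fdown_rec // subnn Fdown0 big_nat big1 ?subr0 // => j j_bd.
by rewrite Fdown_small ?mulr0 //; lia.
Qed.

Lemma Fdown_sparse_rec i :
  Fdown (i.+1 + k) = (1 + 'X^k) * Fdown i.+1 - 'X * Fdown i.
Proof.
set S1 := \sum_(1 <= j < k) 'X^j * Fdown (i.+1 + k - j).
set S2 := \sum_(1 <= j < k) 'X^j * Fdown (i + k - j).
have rec1 : Fdown (i.+1 + k) = Fdown i.+1 - S1 by rewrite Fdown_rec ?addnK ?leq_addl.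
have rec2 : Fdown (i + k) = Fdown i - S2 by rewrite Fdown_rec ?addnK ?leq_addl.
(* The inner sums at [i.+1 + k] and [i + k] agree up to a shift of [j]. *)
have shift : 'X * Fdown (i + k) + 'X * S2 = S1 + 'X^k * Fdown i.+1.
  have k_gt0 : (0 < k)%N := ltnW k_gt1.
  rewrite -(addnK k i.+1) -big_nat_recr //= -[in RHS](prednK k_gt0).
  rewrite big_nat_recl // prednK // mulr_sumr /= expr1 addSn subn1.
  by congr (_ + _); apply: eq_bigr => j _; rewrite exprS mulrA subSS.
have eS1 : S1 = 'X * Fdown (i + k) + 'X * S2 - 'X^k * Fdown i.+1.
  by rewrite shift addrK.
by rewrite rec1 eS1 rec2; ring.
Qed.

Lemma Fdown_supp_mod i : supp_mod k i (Fdown i).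
Proof.
elim/ltn_ind: i => i IH.
case: (ltngtP i k) => [i_lt | k_lt_i | ->].
- have [-> | i_gt0] := posnP i; first by rewrite Fdown0; apply: supp_mod1.
  by rewrite Fdown_small ?i_gt0 //; apply: supp_mod0.
- have [j i_eq] : exists j, i = (j.+1 + k)%N by exists (i - k.+1)%N; lia.
  subst i; rewrite Fdown_sparse_rec mulrDl mul1r.
  apply: supp_modB; first apply: supp_modD.
  + by apply: (@supp_mod_congr _ _ j.+1); [rewrite modnDr | apply: IH; lia].
  + apply: (@supp_mod_congr _ _ (k + j.+1)); first by rewrite addnC.
    by apply/supp_modXnM/IH; lia.
  + rewrite -['X]expr1; apply: (@supp_mod_congr _ _ (1 + j)).
      by rewrite add1n modnDr.
    by apply/supp_modXnM/IH; lia.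
- by rewrite Fdown_k; apply: supp_mod1; rewrite modnn mod0n.
Qed.

Lemma Fdown_coef a b : (b < k)%N ->
  (Fdown (k * a + b))`_b = (-1) ^+ b * 'C(a, b)%:R.
Proof.
have k_gt0 : (0 < k)%N := ltnW k_gt1.
elim: a b => [|a IH] b b_lt.
  rewrite muln0 add0n; have [-> | b_gt0] := posnP b.
    by rewrite Fdown0 coef1 expr0 mul1r.
  by rewrite Fdown_small ?b_gt0 // coef0 bin0n eqn0Ngt b_gt0 mulr0.
case: b b_lt => [|b] b_lt.
  case: a IH => [_ | a IH]; first by rewrite muln1 addn0 Fdown_k coef1 expr0 mul1r.
  have -> : (k * a.+2 + 0 = (k * a + k.-1).+1 + k)%N by rewrite !mulnS; lia.
  rewrite Fdown_sparse_rec mulrDl mul1r coefB coefD coefXnM coefXM k_gt0 /=.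
  have -> : ((k * a + k.-1).+1 = k * a.+1 + 0)%N by rewrite mulnS; lia.
  by rewrite IH // addr0 subr0 !bin0.
have -> : (k * a.+1 + b.+1 = (k * a + b).+1 + k)%N by rewrite mulnS; lia.
rewrite Fdown_sparse_rec mulrDl mul1r coefB coefD coefXnM coefXM b_lt /=.
rewrite -addnS !IH ?(ltnW b_lt) // binS natrD exprS; ring.
Qed.

Lemma Fdown_eq0 a b : (b < k)%N -> (a < b)%N -> Fdown (k * a + b) = 0.
Proof.
elim: a b => [|a IH] b b_lt a_lt; first by rewrite muln0 add0n Fdown_small ?a_lt.
case: b b_lt a_lt => [//|b] b_lt a_lt.
have -> : (k * a.+1 + b.+1 = (k * a + b).+1 + k)%N by rewrite mulnS; lia.
rewrite Fdown_sparse_rec -addnS (IH b.+1 b_lt (ltnW a_lt)).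
by rewrite (IH b (ltnW b_lt) a_lt) !mulr0 subr0.
Qed.

Lemma Fdown_factor i : Fdown i != 0 ->
  exists P : {poly int}, P`_0 != 0 /\ Fdown i = 'X^(i %% k) * (P \Po 'X^k).
Proof.
move=> Fi0; have k_gt0 : (0 < k)%N := ltnW k_gt1.
have [P [Fi_eq P0]] := supp_mod_comp_Xn k_gt0 (@Fdown_supp_mod i).
have b_lt := ltn_pmod i k_gt0.
have small_div : (i %% k <= i %/ k)%N.
  rewrite leqNgt; apply: contra Fi0 => div_lt; apply/eqP.
  by have := Fdown_eq0 b_lt div_lt; rewrite mulnC -divn_eq.
exists P; split=> //; rewrite P0.
have := Fdown_coef (i %/ k) b_lt; rewrite mulnC -divn_eq => ->.
by rewrite mulf_neq0 ?signr_eq0 // pnatr_eq0 -lt0n bin_gt0.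
Qed.
End Downward.

Lemma Fpoly0 k : (1 < k)%N -> Fpoly k 0 = 0.
Proof. by move=> k_gt1; rewrite /Fpoly /= -nth0 Fdown_win_nth ?Fdown_small //; lia. Qed.

Lemma Fpoly_Posz k m : (1 < k)%N -> Fpoly k m.+1 = Fup k (m + k.-1).
Proof. by move=> k_gt1; rewrite /Fpoly /= -nth0 Fup_win_nth ?subn0 // ltnW. Qed.

Lemma Fpoly_Negz k m : (1 < k)%N -> Fpoly k (Negz m) = Fdown k m.+2.
Proof.
move=> k_gt1; rewrite /Fpoly /= -nth0 (Fdown_win_nth k_gt1 _ (ltnW k_gt1)) subn0.
have [k_le | k_gt] := leqP k m.+3; first by congr Fdown; lia.
by rewrite !Fdown_small //; lia.
Qed.

Lemma Fpoly_factor k n : (1 < k)%N -> Fpoly k n != 0 ->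
  exists P : {poly int}, P`_0 != 0 /\ Fpoly k n = 'X^(rnk k n) * (P \Po 'X^k).
Proof.
move=> k_gt1; have k_gt0 : (0 < k)%N := ltnW k_gt1.
case: n => [[|m] | m]; first by rewrite Fpoly0 ?eqxx.
  rewrite Fpoly_Posz // => _; have := Fup_factor k_gt1 (leq_addl m k.-1).
  by rewrite -addnS (prednK k_gt0) mulnDr [(k.-1 * m + _)%N]addnC modnMDl.
by rewrite Fpoly_Negz //; apply: Fdown_factor.
Qed.

Theorem mainTheorem12 (k : nat) (n : int) :
  (2 <= k)%N -> Fpoly k n != 0 ->
  (exists P : {poly int},
      P.[0] != 0 /\ Fpoly k n = 'X^(rnk k n) * (P \Po 'X^k))
  /\ ((0 < rnk k n)%N -> root (Fpoly k n) 0 /\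
       exists Q : {poly int}, Fpoly k n = 'X^(rnk k n) * Q /\ ~~ root Q 0)
  /\ (rnk k n = 0%N -> ~~ root (Fpoly k n) 0).
Proof.
move=> k_gt1 Fn0; have k_gt0 : (0 < k)%N := ltnW k_gt1.
have [P [P0 Fn_eq]] := Fpoly_factor k_gt1 Fn0.
have PXk0 : (P \Po 'X^k).[0] = P`_0.
  by rewrite horner_comp hornerXn expr0n eqn0Ngt k_gt0 horner_coef0.
split; first by exists P; rewrite horner_coef0.
split=> [r_gt0 | r0]; last by rewrite /root Fn_eq r0 mul1r PXk0.
split; first by rewrite /root Fn_eq hornerM hornerXn expr0n eqn0Ngt r_gt0 mul0r.
by exists (P \Po 'X^k); rewrite /root PXk0.
Qed.
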